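(* Let $\mathbb{K}$ be a field and $f=a_0(x)+a_1(x)y+\cdots+a_n(x)y^n\in\mathbb{K}[x,y]$ with $n\geq 2$, $a_0,\ldots,a_n\in\mathbb{K}[x]$, $a_0a_n\neq 0$. Assume that $f$ has no nonconstant factor in $\mathbb{K}[x]$, and let $\nu_0$ and $\nu_n$ be the number of irreducible factors of $a_0(x)$ and $a_n(x)$ in $\mathbb{K}[x]$, respectively, counted with their multiplicities. (i) If $\deg a_0>\max\{\deg a_1,\dots,\deg a_n\}$, then $f$ is a product of at most $\nu_0$ irreducible polynomials over $\mathbb{K}[x]$. (ii) If $\deg a_n>\max\{\deg a_0,\dots,\deg a_{n-1}\}$, then $f$ is a product of at most $\nu_n$ irreducible polynomials over $\mathbb{K}[x]$.
   Context: $f$ is regarded as a polynomial in $y$ with coefficients in $\mathbb{K}[x]$; ''a product of at most $k$ irreducible polynomials over $\mathbb{K}[x]$'' means that in the factorization of $f$ into irreducible elements of $\mathbb{K}[x][y]$ the number of factors, counted with multiplicities, is at most $k$. *)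

From HB Require Import structures.
From mathcomp Require Import all_boot all_order all_algebra.
Set Implicit Arguments. Unset Strict Implicit. Unset Printing Implicit Defensive.
Import GRing.Theory.
Local Open Scope ring_scope.

Definition irreducible_elt (R : comUnitRingType) (p : R) : Prop :=
  [/\ p != 0, p \isn't a GRing.unit &
      forall a b : R, p = a * b -> a \is a GRing.unit \/ b \is a GRing.unit].

Definition prod_at_most_irr (R : comUnitRingType) (k : nat) (p : R) : Prop :=
  exists s : seq R, [/\ (size s <= k)%N, (forall q, q \in s -> irreducible_elt q)
                     & p = \prod_(q <- s) q].

Definition num_irr_factors (K : fieldType) (a : {poly K}) (m : nat) : Prop :=
  exists c : K, exists s : seq {poly K},
    [/\ c != 0, size s = m, (forall q, q \in s -> irreducible_poly q)
      & a = c%:P * \prod_(q <- s) q].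

Definition no_nonconst_xfactor (K : fieldType) (f : {poly {poly K}}) : Prop :=
  forall (g : {poly K}) (h : {poly {poly K}}), f = g%:P * h -> (size g <= 1)%N.

(* Let lead_coefY u be the coefficient of the highest power of x in
   u(x, y), a polynomial in y.  It is multiplicative, and hypothesis (i)
   (resp. (ii)) says that lead_coefY f is a nonzero constant (resp. a monomial
   c y^n with n = deg_y f).  These shapes are inherited by every factor q of f,
   since deg lead_coefY q <= deg_y q and degrees add up; in case (ii) the
   condition a_0 <> 0 moreover excludes factors lying in K[y].  Consequently
   every irreducible factor q of f has a constant term q(x, 0) (resp. a
   leading coefficient in y) of positive degree in x.  As f |-> f(x, 0) and
   f |-> a_n are multiplicative, a factorization of f into k irreducibles
   yields k nonconstant factors of a_0 (resp. a_n) in the factorial ring K[x],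
   so k <= nu_0 (resp. k <= nu_n). *)

From mathcomp Require Import all_boot all_order all_algebra.
From mathcomp Require Import ring zify.
From Stdlib Require Import Classical.
Set Implicit Arguments.
Unset Strict Implicit.
Unset Printing Implicit Defensive.
Import GRing.Theory.
Local Open Scope ring_scope.

Section IrreducibleElements.
Variable R : comUnitRingType.

Lemma irreducible_eltMl (u q : R) :
  u \is a GRing.unit -> irreducible_elt q -> irreducible_elt (u * q).
Proof.
move=> uU [qN0 qNU q_irr]; split.
- by rewrite -(mulr0 u) (inj_eq (mulrI uU)).
- by rewrite unitrMr.
- move=> a b uq_ab; have /q_irr[aU|] : q = (u^-1 * a) * b.
    by rewrite -mulrA -uq_ab mulKr.
  + by left; rewrite unitrMr ?unitrV in aU.
  + by right.
Qed.

Lemma prod_at_most_irrMl k (u p : R) :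
  u \is a GRing.unit -> p \isn't a GRing.unit ->
  prod_at_most_irr k p -> prod_at_most_irr k (u * p).
Proof.
move=> uU pNU [[|q s] [size_s s_irr p_eq]].
  by move: pNU; rewrite p_eq big_nil unitr1.
exists (u * q :: s); split=> //.
- move=> r; rewrite in_cons => /predU1P[->|r_s].
    by apply: irreducible_eltMl => //; apply: s_irr; rewrite mem_head.
  by apply: s_irr; rewrite in_cons r_s orbT.
- by rewrite p_eq !big_cons mulrA.
Qed.

End IrreducibleElements.

Section Univariate.
Variable K : fieldType.
Implicit Types (p q : {poly K}) (s t : seq {poly K}).

Lemma irredp_dvdM q p1 p2 :
  irreducible_poly q -> q %| p1 * p2 -> (q %| p1) || (q %| p2).
Proof.
move=> q_irr q_p1p2; have [//|qNp1] := boolP (q %| p1).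
have q_p1 : coprimep q p1 by rewrite irreducible_poly_coprime.
by rewrite (Gauss_dvdpr _ q_p1) in q_p1p2; rewrite q_p1p2 orbT.
Qed.

Lemma irredp_dvd_prod q t : irreducible_poly q ->
  q %| \prod_(p <- t) p -> exists2 p, p \in t & q %| p.
Proof.
move=> q_irr; elim: t => [|p t IHt].
  by rewrite big_nil dvdp1 => /eqP q1; case: q_irr; rewrite q1.
rewrite big_cons => /(@irredp_dvdM q _ _ q_irr)/orP[q_p|/IHt[p' p't q_p']].
  by exists p; rewrite ?mem_head.
by exists p'; rewrite // in_cons p't orbT.
Qed.

Lemma count_nonconst_le_irr_factors (c : K) s t : c != 0 ->
  (forall q, q \in s -> irreducible_poly q) ->
  c%:P * \prod_(q <- s) q = \prod_(p <- t) p ->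
  (count (fun p => 1 < size p) t <= size s)%N.
Proof.
elim: s c t => [|q s IHs] c t cN0 s_irr.
  rewrite big_nil mulr1 => c_eq.
  rewrite (eq_in_count (a2 := pred0)) ?count_pred0 //.
  move=> p p_t /=; apply/negbTE; rewrite -leqNgt.
  apply: leq_trans (size_polyC_leq1 c).
  by apply: dvdp_leq; rewrite ?polyC_eq0 // c_eq (big_rem _ p_t) dvdp_mulIl.
rewrite big_cons => qs_t.
have q_irr : irreducible_poly q by apply: s_irr; rewrite mem_head.
have [p p_t q_p] : exists2 p, p \in t & q %| p.
  by apply: irredp_dvd_prod => //; rewrite -qs_t mulrCA dvdp_mulIl.
have s'_t' : c%:P * \prod_(q <- s) q = \prod_(r <- p %/ q :: rem p t) r.
  apply: (mulIf (irredp_neq0 q_irr)).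
  rewrite big_cons [RHS]mulrAC divpK //.
  by move: qs_t; rewrite (big_rem _ p_t) => <-; ring.
have s_irr' : forall r, r \in s -> irreducible_poly r.
  by move=> r r_s; apply: s_irr; rewrite in_cons r_s orbT.
have /= le_s := IHs c _ cN0 s_irr' s'_t'.
rewrite (permP (perm_to_rem p_t)) /=.
apply: (@leq_add _ _ 1); first exact: leq_b1.
by apply: leq_trans le_s; apply: leq_addl.
Qed.

Lemma dvdp_Xn_mup p n : p != 0 -> ('X^n %| p) = (n <= mup 0 p)%N.
Proof. by move=> pN0; rewrite mup_geq // polyC0 subr0. Qed.

Lemma mup0_lt_size p : p != 0 -> (mup 0 p < size p)%N.
Proof.
move=> pN0; have : 'X^(mup 0 p) %| p by rewrite dvdp_Xn_mup.
by move/(dvdp_leq pN0); rewrite size_polyXn.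
Qed.

End Univariate.

Section LeadCoefY.
Variable R : idomainType.
Implicit Types (u v : {poly {poly R}}).

(* The x of the paper is the inner variable, called 'Y in polyXY. *)
Definition lead_coefY u : {poly R} := lead_coef (swapXY u).

Lemma lead_coefYM u v : lead_coefY (u * v) = lead_coefY u * lead_coefY v.
Proof. by rewrite /lead_coefY rmorphM lead_coefM. Qed.

Lemma lead_coefY_eq0 u : (lead_coefY u == 0) = (u == 0).
Proof. by rewrite /lead_coefY lead_coef_eq0 swapXY_eq0. Qed.

Lemma coef_lead_coefY u j : (lead_coefY u)`_j = u`_j`_(sizeY u).-1.
Proof. by rewrite /lead_coefY /lead_coef sizeYE coef_swapXY. Qed.

Lemma size_lead_coefY u : (size (lead_coefY u) <= size u)%N.
Proof.
apply/leq_sizeP => j le_u_j.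
by rewrite coef_lead_coefY (nth_default 0 le_u_j) coef0.
Qed.

Lemma coef_lead_coefY_eq0 u j :
  u != 0 -> ((lead_coefY u)`_j == 0) = (size (u`_j)%R < sizeY u)%N.
Proof.
move=> uN0; rewrite coef_lead_coefY ltn_neqAle max_size_coefXY andbT.
have [uj_eq|uj_neq] := eqVneq (size u`_j) (sizeY u).
  rewrite -uj_eq -lead_coefE lead_coef_eq0 -size_poly_eq0 uj_eq.
  by rewrite sizeY_eq0 (negPf uN0).
apply/eqP/nth_default; rewrite -ltnS prednK ?lt0n ?sizeY_eq0 //.
by rewrite ltn_neqAle uj_neq max_size_coefXY.
Qed.

Lemma sizeYM u v :
  u != 0 -> v != 0 -> sizeY (u * v) = (sizeY u + sizeY v).-1.
Proof. by move=> uN0 vN0; rewrite !sizeYE rmorphM size_mul ?swapXY_eq0. Qed.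

Lemma sizeY1_lead_coefY u : (sizeY u <= 1)%N -> u = (lead_coefY u)^:P.
Proof.
move=> le_u1; apply/polyP => j; rewrite coef_map /= coef_lead_coefY.
have [->|uN0] := eqVneq u 0; first by rewrite coef0 coef0 polyC0.
have -> : sizeY u = 1 by apply/eqP; rewrite eqn_leq le_u1 lt0n sizeY_eq0.
exact/size1_polyC/(leq_trans (max_size_coefXY u j)).
Qed.

Lemma lead_coefY_dominant u k :
  (forall i, i != k -> size (u`_i)%R < size (u`_k)%R)%N ->
  lead_coefY u = (lead_coef u`_k)%:P * 'X^k.
Proof.
move=> dom_k; have sizeY_u : sizeY u = size u`_k.
  apply/eqP; rewrite eqn_leq max_size_coefXY andbT.
  apply/bigmax_leqP => i _; have [->//|/dom_k/ltnW//] := eqVneq (i : nat) k.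
apply/polyP => j; rewrite coefCM coefXn coef_lead_coefY sizeY_u.
have [->|/dom_k lt_jk] := eqVneq j k; first by rewrite mulr1.
by rewrite mulr0 nth_default // -ltnS (ltn_predK lt_jk).
Qed.

End LeadCoefY.

Section BivariateFactorization.
Variable K : fieldType.
Implicit Types (u f q r : {poly {poly K}}).

Lemma poly_polyC_unitP u :
  reflect (exists2 c : K, c != 0 & u = c%:P%:P) (u \is a GRing.unit).
Proof.
apply: (iffP idP) => [|[c cN0 ->]]; last first.
  by rewrite !poly_unitE !coefC /= !size_polyC polyC_eq0 cN0 unitfE.
rewrite poly_unitE => /andP[/eqP u1].
rewrite poly_unitE => /andP[/eqP u01 u00U].
exists u`_0`_0; first by rewrite -unitfE.
by rewrite {1}(size1_polyC (eq_leq u1)) {1}(size1_polyC (eq_leq u01)).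
Qed.

Lemma size_sizeY_unit u :
  u != 0 -> (size u <= 1)%N -> (sizeY u <= 1)%N -> u \is a GRing.unit.
Proof.
move=> uN0 le_u1 /sizeY1_lead_coefY u_eq.
have /size1_polyC L_eq := leq_trans (size_lead_coefY u) le_u1.
apply/poly_polyC_unitP; exists (lead_coefY u)`_0.
  by rewrite -polyC_eq0 -L_eq lead_coefY_eq0.
by rewrite {1}u_eq {1}L_eq map_polyC.
Qed.

Lemma nonunit_size_sizeY u :
  u != 0 -> u \isn't a GRing.unit -> (2 < size u + sizeY u)%N.
Proof.
move=> uN0; apply: contraR; rewrite -leqNgt => le_2.
have u_gt0 : (0 < size u)%N by rewrite size_poly_gt0.
have uY_gt0 : (0 < sizeY u)%N by rewrite lt0n sizeY_eq0.
by apply: size_sizeY_unit; lia.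
Qed.

Lemma irreducible_factorization u : u != 0 ->
  exists (c : K) (s : seq {poly {poly K}}),
    [/\ c != 0, forall q, q \in s -> irreducible_elt q
      & u = c%:P%:P * \prod_(q <- s) q].
Proof.
have [n] := ubnP (size u + sizeY u); elim: n u => // n IHn u lt_u_n uN0.
have [uU|uNU] := boolP (u \is a GRing.unit).
  have /poly_polyC_unitP[c cN0 ->] := uU.
  by exists c, [::]; split; rewrite ?big_nil ?mulr1.
have [[a [b [u_ab aNU bNU]]]|u_irr] := classic (exists a b : {poly {poly K}},
    [/\ u = a * b, a \isn't a GRing.unit & b \isn't a GRing.unit]).
  have [aN0 bN0] : a != 0 /\ b != 0.
    by apply/andP; rewrite -negb_or -mulf_eq0 -u_ab.
  have lt_a := nonunit_size_sizeY aN0 aNU.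
  have lt_b := nonunit_size_sizeY bN0 bNU.
  have lt_ab_n : ((size a + size b).-1 + (sizeY a + sizeY b).-1 < n.+1)%N.
    by rewrite -size_mul // -sizeYM // -u_ab.
  have [lt_a_n lt_b_n] : (size a + sizeY a < n)%N /\ (size b + sizeY b < n)%N.
    by rewrite -!subn1 in lt_ab_n; lia.
  have [ca [sa [caN0 sa_irr a_eq]]] := IHn a lt_a_n aN0.
  have [cb [sb [cbN0 sb_irr b_eq]]] := IHn b lt_b_n bN0.
  exists (ca * cb), (sa ++ sb); split.
  - by rewrite mulf_neq0.
  - by move=> q; rewrite mem_cat => /orP[/sa_irr|/sb_irr].
  - by rewrite u_ab a_eq b_eq big_cat /= !polyCM; ring.
exists 1, [:: u]; split; rewrite ?oner_neq0 ?big_seq1 ?polyC1 ?mul1r //.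
move=> q; rewrite mem_seq1 => /eqP ->; split => // a b u_ab.
have [aU|aNU] := boolP (a \is a GRing.unit); [by left | right].
by apply/negPn/negP => bNU; apply: u_irr; exists a, b.
Qed.

Lemma prod_at_most_irr_of_morph (phi : {poly {poly K}} -> {poly K}) f m :
  {morph phi : u v / u * v} -> (forall c, phi c%:P%:P = c%:P) ->
  f != 0 -> f \isn't a GRing.unit ->
  (forall q r, irreducible_elt q -> f = q * r -> (1 < size (phi q))%N) ->
  num_irr_factors (phi f) m -> prod_at_most_irr m f.
Proof.
move=> phiM phiC fN0 fNU phi_irr [d [t [dN0 size_t t_irr phif_eq]]].
have [c [s [cN0 s_irr f_eq]]] := irreducible_factorization fN0.
have phi1 : phi 1 = 1 by move: (phiC 1); rewrite !polyC1.
have phi_s : (d / c)%:P * \prod_(p <- t) p = \prod_(p <- map phi s) p.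
  apply: (mulfI (_ : c%:P != 0)); first by rewrite polyC_eq0.
  rewrite mulrA -polyCM (mulrC c) divfK // -phif_eq f_eq phiM phiC.
  by rewrite big_map (big_morph phi phiM phi1).
have s_nonconst q : q \in s -> (1 < size (phi q))%N.
  move=> q_s; apply: (phi_irr q (c%:P%:P * \prod_(p <- rem q s) p)).
    exact: s_irr.
  by rewrite f_eq (big_rem _ q_s) /=; ring.
have le_s_m : (size s <= m)%N.
  have dcN0 : d / c != 0 by rewrite mulf_neq0 ?invr_eq0.
  have := count_nonconst_le_irr_factors dcN0 t_irr phi_s.
  by rewrite size_t count_map (eq_in_count (a2 := predT)) ?count_predT.
rewrite f_eq; apply: prod_at_most_irrMl.
- by apply/poly_polyC_unitP; exists c.
- apply: contra fNU; rewrite f_eq => sU; rewrite unitrMr //.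
  by apply/poly_polyC_unitP; exists c.
- by exists s.
Qed.

Lemma irreducible_factor_size_coef0 f q r : size (lead_coefY f) = 1%N ->
  irreducible_elt q -> f = q * r -> (1 < size (q`_0)%R)%N.
Proof.
move=> Lf1 [qN0 qNU _] f_eq.
have fN0 : f != 0 by rewrite -lead_coefY_eq0 -size_poly_eq0 Lf1.
have rN0 : r != 0 by apply: contraNneq fN0 => r0; rewrite f_eq r0 mulr0.
have Lq1 : size (lead_coefY q) = 1%N.
  have := size_poly_gt0 (lead_coefY q); have := size_poly_gt0 (lead_coefY r).
  rewrite !lead_coefY_eq0 qN0 rN0; move: Lf1.
  by rewrite f_eq lead_coefYM size_mul ?lead_coefY_eq0 // -subn1; lia.
have sizeY_q : (1 < sizeY q)%N.
  rewrite ltnNge; apply: contra qNU => le_q1; apply: size_sizeY_unit => //.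
  by rewrite (sizeY1_lead_coefY le_q1) size_map_polyC Lq1.
have /size1_polyC Lq_eq := eq_leq Lq1.
have : (lead_coefY q)`_0 != 0 by rewrite -polyC_eq0 -Lq_eq lead_coefY_eq0.
by rewrite coef_lead_coefY_eq0 // -leqNgt; apply: leq_trans.
Qed.

Lemma irreducible_factor_size_lead_coef f q r : f`_0 != 0 ->
  'X^((size f).-1) %| lead_coefY f -> irreducible_elt q -> f = q * r ->
  (1 < size (lead_coef q))%N.
Proof.
move=> f0N0 Xn_Lf [qN0 qNU _] f_eq.
have [q0N0 r0N0] : q`_0 != 0 /\ r`_0 != 0.
  by apply/andP; rewrite -negb_or -mulf_eq0 -coef0M -f_eq.
have rN0 : r != 0 by apply: contraNneq r0N0 => ->; rewrite coef0.
have LqN0 : lead_coefY q != 0 by rewrite lead_coefY_eq0.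
have LrN0 : lead_coefY r != 0 by rewrite lead_coefY_eq0.
have Xn_Lq : 'X^((size q).-1) %| lead_coefY q.
  have mup_Lq : (mup 0 (lead_coefY q) < size q)%N.
    exact: leq_trans (mup0_lt_size LqN0) (size_lead_coefY q).
  have mup_Lr : (mup 0 (lead_coefY r) < size r)%N.
    exact: leq_trans (mup0_lt_size LrN0) (size_lead_coefY r).
  have : ((size q + size r).-1.-1
           <= mup 0 (lead_coefY q) + mup 0 (lead_coefY r))%N.
    rewrite -size_mul // -f_eq -mupM // -lead_coefYM -f_eq -dvdp_Xn_mup //.
    by rewrite lead_coefY_eq0 f_eq mulf_neq0.
  by rewrite dvdp_Xn_mup // -!subn1; lia.
have size_Lq : size (lead_coefY q) = size q.
  apply/eqP; rewrite eqn_leq size_lead_coefY /=.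
  by have := dvdp_leq LqN0 Xn_Lq; rewrite size_polyXn prednK // size_poly_gt0.
have le_sizeY : (sizeY q <= size (lead_coef q))%N.
  rewrite leqNgt lead_coefE -coef_lead_coefY_eq0 // -size_Lq -lead_coefE.
  by rewrite lead_coef_eq0.
have [lt_1q|le_q1] := ltnP 1 (sizeY q); first exact: leq_trans le_sizeY.
have q_eq := sizeY1_lead_coefY le_q1.
have /mupNroot mup_Lq0 : ~~ root (lead_coefY q) 0.
  by move: q0N0; rewrite /root horner_coef0 {1}q_eq coef_map /= polyC_eq0.
rewrite dvdp_Xn_mup // mup_Lq0 -subn1 in Xn_Lq.
by case/negP: qNU; apply: size_sizeY_unit => //; lia.
Qed.

End BivariateFactorization.

Theorem theorem1 (K : fieldType) (f : {poly {poly K}}) (nu0 nun : nat) :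
  (3 <= size f)%N ->
  f`_0 * lead_coef f != 0 ->
  no_nonconst_xfactor f ->
  num_irr_factors f`_0 nu0 ->
  num_irr_factors (lead_coef f) nun ->
  ((forall i : nat, [&& (0 < i)%N & (i < size f)%N] -> (size (f`_i)%R < size (f`_0)%R)%N) ->
     prod_at_most_irr nu0 f)
  /\
  ((forall i : nat, (i < (size f).-1)%N -> (size (f`_i)%R < size (lead_coef f))%N) ->
     prod_at_most_irr nun f).
Proof.
move=> size_f f0_lcf_N0 _ nu0_f0 nun_lcf.
have [f0N0 lcfN0] : f`_0 != 0 /\ lead_coef f != 0.
  by apply/andP; rewrite -negb_or -mulf_eq0.
have fN0 : f != 0 by rewrite -lead_coef_eq0.
have fNU : f \isn't a GRing.unit.
  by rewrite poly_unitE gtn_eqF // (leq_trans _ size_f).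
split=> dom.
- apply: (prod_at_most_irr_of_morph (phi := fun u => u`_0)) => //.
  + exact: coef0M.
  + by move=> c; rewrite coefC.
  move=> q r; apply: irreducible_factor_size_coef0.
  rewrite (@lead_coefY_dominant _ _ 0) => [|i i0].
    by rewrite expr0 mulr1 size_polyC lead_coef_eq0 f0N0.
  have [lt_if|le_fi] := ltnP i (size f); first by apply: dom; rewrite lt0n i0.
  by rewrite nth_default // size_poly0 size_poly_gt0.
- apply: (prod_at_most_irr_of_morph (phi := lead_coef)) => //.
  + exact: lead_coefM.
  + by move=> c; rewrite lead_coefC.
  move=> q r; apply: irreducible_factor_size_lead_coef => //.
  rewrite (@lead_coefY_dominant _ _ (size f).-1) ?dvdp_mulIr // => i in_f.
  case: (ltngtP i (size f).-1) in_f => // [lt_in|gt_in] _; first exact: dom.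
  by rewrite nth_default ?size_poly0 ?size_poly_gt0 // -(ltn_predK size_f).
Qed.
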